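(* Let $(\mathcal E,B,\mathcal L_{\mathcal P})$ be an epistemic space and $\mathcal S$ a set of agents. An ES combination operator $\nabla$ is an ES basic fusion operator if and only if there exists a unique basic assignment $\Phi\mapsto\succeq_\Phi$ such that for every profile $\Phi$ and every $E\in\mathcal E$, $$[\![B(\nabla(\Phi,E))]\!]=\max\big([\![B(E)]\!],\succeq_\Phi\big).$$
   Context: $\mathcal L_{\mathcal P}$ is the set of propositional formulas over a finite set $\mathcal P$ of variables, $\mathcal W_{\mathcal P}$ its set of valuations, $[\![\phi]\!]$ the set of models of $\phi$. An epistemic space is a triple $(\mathcal E,B,\mathcal L_{\mathcal P})$ with $\mathcal E$ a nonempty set and $B:\mathcal E\to\mathcal L_{\mathcal P}$ whose image modulo logical equivalence is exactly the set of consistent formulas modulo equivalence. Agents form a well-ordered set $(\mathcal S,<)$; a society is a nonempty finite $N\subseteq\mathcal S$; an $N$-profile is a function $\Phi:N\to\mathcal E$, $E_i:=\Phi(i)$; for $N=\{i\}$ it is identified with $E_i$. Profiles $\Phi$ on $N=\{i_1<\dots<i_n\}$ and $\Psi$ on $M=\{j_1<\dots<j_m\}$ are equivalent, $\Phi\equiv\Psi$, if $n=m$ and $\Phi(i_k)=\Psi(j_k)$ for all $k$. An ES combination operator $\nabla$ assigns to every profile $\Phi$ and every $E\in\mathcal E$ an element $\nabla(\Phi,E)\in\mathcal E$. It is an ES basic fusion operator if for all profiles $\Phi,\Phi'$ and $E,E',E''$: (ESF1) $B(\nabla(\Phi,E))\vdash B(E)$; (ESF2) if $\Phi\equiv\Phi'$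 and $B(E)\equiv B(E')$ then $B(\nabla(\Phi,E))\equiv B(\nabla(\Phi',E'))$; (ESF3) if $B(E)\equiv B(E')\wedge B(E'')$ then $B(\nabla(\Phi,E'))\wedge B(E'')\vdash B(\nabla(\Phi,E))$; (ESF4) if $B(E)\equiv B(E')\wedge B(E'')$ and $B(\nabla(\Phi,E'))\wedge B(E'')\nvdash\bot$ then $B(\nabla(\Phi,E))\vdash B(\nabla(\Phi,E'))\wedge B(E'')$. An assignment maps each profile $\Phi$ to a total preorder $\succeq_\Phi$ on $\mathcal W_{\mathcal P}$; it is basic if $\Phi\equiv\Psi$ implies $\succeq_\Phi=\succeq_\Psi$. For a total preorder $\succeq$ and set $C$, $\max(C,\succeq)=\{c\in C:\ c\succeq x\text{ for all }x\in C\}$. *)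

From HB Require Import structures.
From mathcomp Require Import all_boot all_order.
Set Implicit Arguments. Unset Strict Implicit. Unset Printing Implicit Defensive.
Import Order.TTheory.
Local Open Scope order_scope.

Inductive form (V : Type) : Type :=
| FVar of V
| FTop | FBot
| FNeg of form V
| FAnd of form V & form V
| FOr of form V & form V
| FImp of form V & form V.
Arguments FTop {V}. Arguments FBot {V}.

Definition valuation (V : finType) := {ffun V -> bool}.

Fixpoint eval (V : finType) (w : valuation V) (f : form V) : bool :=
  match f with
  | FVar x => w x
  | FTop => true
  | FBot => false
  | FNeg g => ~~ eval w g
  | FAnd g h => eval w g && eval w h
  | FOr g h => eval w g || eval w h
  | FImp g h => eval w g ==> eval w h
  end.

Definition models (V : finType) (f : form V) : {set valuation V} :=
  [set w | eval w f].

Definition entails (V : finType) (f g : form V) : Prop :=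
  forall w : valuation V, eval w f -> eval w g.
Definition fequiv (V : finType) (f g : form V) : Prop :=
  entails f g /\ entails g f.
Definition consistent (V : finType) (f : form V) : Prop := ~ entails f FBot.

(* (E, B, L_P) is an epistemic space: E nonempty, and the image of B modulo
   logical equivalence is exactly the set of consistent formulas modulo
   equivalence. *)
Definition epistemic_space (V : finType) (E : Type) (B : E -> form V) : Prop :=
  inhabited E /\
  (forall e, consistent (B e)) /\
  (forall f : form V, consistent f -> exists e, fequiv (B e) f).

(* Agents form a well-ordered set (S, <): S is a totally ordered type whose
   strict order is well-founded (hypothesis in the theorem). A society is a
   nonempty finite subset N of S, represented by the strictly increasing
   enumeration of its elements; a profile is a function N -> E. *)
Record profile (d : Order.disp_t) (S : orderType d) (E : Type) := Profile {
  soc : seq S;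
  soc_sorted : sorted <%O soc;
  soc_nonempty : soc != [::];
  pval : forall x : S, x \in soc -> E
}.

(* Phi on {i_1<...<i_n} and Psi on {j_1<...<j_m} are equivalent iff n = m and
   Phi(i_k) = Psi(j_k) for all k. *)
Definition prof_equiv d (S : orderType d) E (Phi Psi : profile S E) : Prop :=
  size (soc Phi) = size (soc Psi) /\
  forall k, k < size (soc Phi) ->
  forall (x : S) (hx : x \in soc Phi) (y : S) (hy : y \in soc Psi),
    x = nth x (soc Phi) k -> y = nth y (soc Psi) k ->
    pval hx = pval hy.

Definition ES_basic_fusion d (S : orderType d) (V : finType) (E : Type)
  (B : E -> form V) (nabla : profile S E -> E -> E) : Prop :=
  (forall Phi e, entails (B (nabla Phi e)) (B e)) /\
  (forall Phi Phi' e e', prof_equiv Phi Phi' -> fequiv (B e) (B e') ->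
     fequiv (B (nabla Phi e)) (B (nabla Phi' e'))) /\
  (forall Phi e e' e'', fequiv (B e) (FAnd (B e') (B e'')) ->
     entails (FAnd (B (nabla Phi e')) (B e'')) (B (nabla Phi e))) /\
  (forall Phi e e' e'', fequiv (B e) (FAnd (B e') (B e'')) ->
     consistent (FAnd (B (nabla Phi e')) (B e'')) ->
     entails (B (nabla Phi e)) (FAnd (B (nabla Phi e')) (B e''))).

Definition total_preorder (T : Type) (R : T -> T -> Prop) : Prop :=
  (forall x y, R x y \/ R y x) /\ (forall x y z, R x y -> R y z -> R x z).

Definition assignment d (S : orderType d) (V : finType) (E : Type)
  (A : profile S E -> valuation V -> valuation V -> Prop) : Prop :=
  forall Phi, total_preorder (A Phi).

Definition basic_assignment d (S : orderType d) (V : finType) (E : Type)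
  (A : profile S E -> valuation V -> valuation V -> Prop) : Prop :=
  assignment A /\
  forall Phi Psi, prof_equiv Phi Psi -> forall w w', A Phi w w' <-> A Psi w w'.

Definition maxset (V : finType) (C : {set valuation V})
  (R : valuation V -> valuation V -> Prop) : valuation V -> Prop :=
  fun c => c \in C /\ forall x, x \in C -> R c x.

Definition represents d (S : orderType d) (V : finType) (E : Type)
  (B : E -> form V) (nabla : profile S E -> E -> E)
  (A : profile S E -> valuation V -> valuation V -> Prop) : Prop :=
  forall Phi e w,
    w \in models (B (nabla Phi e)) <-> maxset (models (B e)) (A Phi) w.

(* Read the preorder off the operator on two-element inputs: w is at least as
   plausible as w' for Phi iff w survives in nabla(Phi, E) whenever
   [[B(E)]] = {w, w'}.  ESF3 and ESF4 together say that shrinking the input to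
   a subset that still meets the selected models just intersects the
   selection; applied to pairs inside a given input, this shows that the
   selected models are exactly the maxima of that relation, and applied to
   triples that the relation is transitive.  Conversely the maxima of a total
   preorder satisfy ESF1-ESF4, and a representing preorder is unique because
   it is determined by its maxima on pairs. *)
Set Warnings "-notation-overridden".
From HB Require Import structures.
From mathcomp Require Import all_boot all_order.
From Stdlib Require Import Setoid.
Set Implicit Arguments. Unset Strict Implicit. Unset Printing Implicit Defensive.

Section Semantics.
Variable V : finType.
Implicit Types (f g : form V) (v w : valuation V) (C : {set valuation V}).

Lemma entailsP f g : entails f g <-> models f \subset models g.
Proof.
split=> [H|H w Hw]; first by apply/subsetP => w; rewrite !inE; apply: H.
have : w \in models f by rewrite inE.
by move/(subsetP H); rewrite inE.
Qed.

Lemma fequivP f g : fequiv f g <-> models f = models g.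
Proof.
split=> [[/entailsP fg /entailsP gf]|fg]; first by apply/eqP; rewrite eqEsubset fg gf.
by split; apply/entailsP; rewrite fg.
Qed.

Lemma consistentP f : consistent f <-> models f != set0.
Proof.
split=> [nf|/set0Pn[w fw] /entailsP/subsetP/(_ w fw)]; last by rewrite inE.
by apply/negP => /eqP f0; apply: nf; apply/entailsP; rewrite f0 sub0set.
Qed.

Lemma models_and f g : models (FAnd f g) = models f :&: models g.
Proof. by apply/setP => w; rewrite !inE. Qed.

Definition minterm w : form V :=
  foldr (fun x f => FAnd (if w x then FVar x else FNeg (FVar x)) f) FTop (enum V).

Lemma eval_minterm v w : eval v (minterm w) = (v == w).
Proof.
have eval_conj s : eval v (foldr (fun x f =>
    FAnd (if w x then FVar x else FNeg (FVar x)) f) FTop s) = all (fun x => v x == w x) s.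
  by elim: s => [//|x s IH] /=; rewrite IH; congr (_ && _); case: (w x) => /=; case: (v x).
rewrite /minterm eval_conj; apply/allP/eqP => [Hvw|-> //].
by apply/ffunP => x; apply/eqP/Hvw; rewrite mem_enum.
Qed.

Definition charform C : form V :=
  foldr (fun w f => FOr (minterm w) f) FBot (enum C).

Lemma models_charform C : models (charform C) = C.
Proof.
have eval_disj v s : eval v (foldr (fun w f => FOr (minterm w) f) FBot s) = (v \in s).
  by elim: s => [//|w s IH] /=; rewrite IH eval_minterm in_cons.
by apply/setP => v; rewrite inE eval_disj mem_enum.
Qed.

End Semantics.

Section MaxSet.
Variables (V : finType) (R : valuation V -> valuation V -> Prop).
Implicit Types (C D : {set valuation V}) (u w : valuation V).

Lemma maxset_pair w w' : R w w -> maxset [set w; w'] R w <-> R w w'.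
Proof.
move=> Rww; split=> [[_]|Rww']; first by apply; rewrite !inE eqxx orbT.
by split=> [|x /set2P[]->]; rewrite ?inE ?eqxx.
Qed.

Lemma maxsetI C D w : maxset C R w -> w \in D -> maxset (C :&: D) R w.
Proof. by case=> Cw maxw Dw; split=> [|x /setIP[Cx _]]; [apply/setIP|apply: maxw]. Qed.

Lemma maxsetI_max C D u w : (forall x y z, R x y -> R y z -> R x z) ->
  maxset C R u -> u \in D -> maxset (C :&: D) R w -> maxset C R w.
Proof.
move=> trans [Cu maxu] Du [/setIP[Cw _] maxw]; split=> // x Cx.
by apply: trans (maxu x Cx); apply: maxw; apply/setIP.
Qed.

End MaxSet.

Lemma prof_equiv_refl d (S : orderType d) E (Phi : profile S E) : prof_equiv Phi Phi.
Proof.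
split=> // k k_lt x hx y hy Ex Ey.
have Eyx : y = x by rewrite Ey (set_nth_default x) // -Ex.
by subst y; rewrite (eq_irrelevance hx hy).
Qed.

Section EpistemicSpace.
Variables (V : finType) (E : Type) (B : E -> form V).
Hypothesis hES : epistemic_space B.

Lemma models_neq0 e : models (B e) != set0.
Proof. exact/consistentP/hES.2.1. Qed.

Lemma epistemic_models_surj C : C != set0 -> exists e, models (B e) = C.
Proof.
move=> C_neq0; have [e /fequivP He] : exists e, fequiv (B e) (charform C).
  by apply: hES.2.2; apply/consistentP; rewrite models_charform.
by exists e; rewrite He models_charform.
Qed.

Lemma epistemic_pair w w' : exists e, models (B e) = [set w; w'].
Proof. by apply: epistemic_models_surj; apply/set0Pn; exists w; rewrite !inE eqxx. Qed.

End EpistemicSpace.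

Section RepresentedFusion.
Variables (d : Order.disp_t) (S : orderType d) (V : finType) (E : Type).
Variables (B : E -> form V) (nabla : profile S E -> E -> E).
Variable A : profile S E -> valuation V -> valuation V -> Prop.
Hypothesis rep : represents B nabla A.

Lemma represented_fusion : basic_assignment A -> ES_basic_fusion B nabla.
Proof.
case=> tot inv; split; [|split; [|split]].
- by move=> Phi e; apply/entailsP/subsetP => w /rep[].
- move=> Phi Phi' e e' equiv /fequivP He; apply/fequivP/setP => w.
  apply/idP/idP => /rep[Cw maxw]; apply/rep.
    by rewrite -He; split=> // x Cx; apply/(inv _ _ equiv)/maxw.
  by rewrite He; split=> // x Cx; apply/(inv _ _ equiv)/maxw.
- move=> Phi e e' e'' /fequivP He; apply/entailsP/subsetP => w.
  rewrite models_and => /setIP[/rep max_w D_w]; apply/rep.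
  by rewrite He models_and; apply: maxsetI.
- move=> Phi e e' e'' /fequivP He /consistentP; rewrite models_and.
  case/set0Pn => u /setIP[/rep max_u D_u]; apply/entailsP/subsetP => w /rep.
  rewrite He models_and => max_w; rewrite models_and; apply/setIP; split.
    by apply/rep; apply: maxsetI_max max_u D_u max_w; exact: (tot Phi).2.
  by case: max_w => /setIP[].
Qed.

Lemma represents_pairE Phi e w w' : assignment A -> models (B e) = [set w; w'] ->
  A Phi w w' <-> w \in models (B (nabla Phi e)).
Proof.
move=> tot He; rewrite rep He maxset_pair //.
by case: ((tot Phi).1 w w).
Qed.

End RepresentedFusion.

Lemma represents_unique d (S : orderType d) (V : finType) (E : Type) (B : E -> form V)
    (hES : epistemic_space B) (nabla : profile S E -> E -> E)
    (A A' : profile S E -> valuation V -> valuation V -> Prop)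
    (totA : assignment A) (repA : represents B nabla A)
    (totA' : assignment A') (repA' : represents B nabla A') Phi w w' :
  A Phi w w' <-> A' Phi w w'.
Proof.
have [e He] := epistemic_pair hES w w'.
by rewrite (represents_pairE repA Phi totA He) (represents_pairE repA' Phi totA' He).
Qed.

Section RevealedPreference.
Variables (d : Order.disp_t) (S : orderType d) (V : finType) (E : Type) (B : E -> form V).
Hypothesis hES : epistemic_space B.
Variable nabla : profile S E -> E -> E.
Hypothesis hF : ES_basic_fusion B nabla.
Implicit Types (Phi Psi : profile S E) (e : E) (u w x : valuation V).

Lemma fusion_sub Phi e : models (B (nabla Phi e)) \subset models (B e).
Proof. exact/entailsP/hF.1. Qed.

Lemma fusion_congr Phi Psi e e' : prof_equiv Phi Psi -> models (B e) = models (B e') ->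
  models (B (nabla Phi e)) = models (B (nabla Psi e')).
Proof. by move=> equiv /fequivP He; apply/fequivP/hF.2.1. Qed.

Lemma fusion_restrict Phi e e' : models (B e') \subset models (B e) ->
  models (B (nabla Phi e)) :&: models (B e') != set0 ->
  models (B (nabla Phi e')) = models (B (nabla Phi e)) :&: models (B e').
Proof.
case: hF => _ [_ [ESF3 ESF4]] sub meets.
have Hdecomp : fequiv (B e') (FAnd (B e) (B e')).
  by apply/fequivP; rewrite models_and (setIidPr sub).
apply/eqP; rewrite eqEsubset -models_and; apply/andP; split; apply/entailsP.
  by apply: ESF4 => //; apply/consistentP; rewrite models_and.
exact: ESF3.
Qed.

Definition revealed_pref Phi w w' : Prop :=
  forall e, models (B e) = [set w; w'] -> w \in models (B (nabla Phi e)).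

Lemma revealed_prefE Phi e w w' : models (B e) = [set w; w'] ->
  revealed_pref Phi w w' <-> w \in models (B (nabla Phi e)).
Proof.
move=> He; split=> [|Hw e' He']; first exact.
by rewrite (fusion_congr (prof_equiv_refl Phi) (etrans He' (esym He))).
Qed.

Lemma fusion_pairE Phi e ep w x u : models (B ep) = [set w; x] ->
  w \in models (B e) -> x \in models (B e) ->
  u \in [set w; x] -> u \in models (B (nabla Phi e)) ->
  models (B (nabla Phi ep)) = models (B (nabla Phi e)) :&: [set w; x].
Proof.
move=> Hep Cw Cx pair_u sel_u; rewrite -Hep (@fusion_restrict Phi e ep) //.
  by rewrite Hep; apply/subsetP => z /set2P[]->.
by apply/set0Pn; exists u; rewrite Hep; apply/setIP.
Qed.

Lemma revealed_pref_of_fusion Phi e w x :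
  w \in models (B (nabla Phi e)) -> x \in models (B e) -> revealed_pref Phi w x.
Proof.
move=> sel_w Cx; have [ep Hep] := epistemic_pair hES w x.
have Cw := subsetP (fusion_sub Phi e) w sel_w.
apply/(revealed_prefE Phi Hep).
by rewrite (fusion_pairE Hep Cw Cx (set21 w x) sel_w) in_setI sel_w set21.
Qed.

Lemma fusion_of_revealed_pref Phi e w m :
  m \in models (B (nabla Phi e)) -> w \in models (B e) -> revealed_pref Phi w m ->
  w \in models (B (nabla Phi e)).
Proof.
move=> sel_m Cw; have [ep Hep] := epistemic_pair hES w m.
have Cm := subsetP (fusion_sub Phi e) m sel_m.
by move/(revealed_prefE Phi Hep); rewrite (fusion_pairE Hep Cw Cm (set22 w m) sel_m) => /setIP[].
Qed.

Lemma revealed_pref_represents : represents B nabla revealed_pref.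
Proof.
move=> Phi e w; split=> [sel_w|[Cw maxw]].
  split=> [|x]; [exact: subsetP (fusion_sub Phi e) w sel_w|exact: revealed_pref_of_fusion].
have [m sel_m] := set0Pn _ (models_neq0 hES (nabla Phi e)).
exact: fusion_of_revealed_pref sel_m Cw (maxw m (subsetP (fusion_sub Phi e) m sel_m)).
Qed.

Lemma revealed_pref_total_preorder Phi : total_preorder (revealed_pref Phi).
Proof.
split=> [x y|x y z Rxy Ryz].
  have [e He] := epistemic_pair hES x y.
  have [m sel_m] := set0Pn _ (models_neq0 hES (nabla Phi e)).
  have := subsetP (fusion_sub Phi e) m sel_m; rewrite He => /set2P[Em|Em]; subst m.
    by left; apply: revealed_pref_of_fusion sel_m _; rewrite He !inE eqxx orbT.
  by right; apply: revealed_pref_of_fusion sel_m _; rewrite He !inE eqxx.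
have [e He] : exists e, models (B e) = [set x; y; z].
  by apply: (epistemic_models_surj hES); apply/set0Pn; exists x; rewrite !inE eqxx.
have [Cx Cy Cz] : [/\ x \in models (B e), y \in models (B e) & z \in models (B e)].
  by rewrite He !inE !eqxx !orbT.
have [m sel_m] := set0Pn _ (models_neq0 hES (nabla Phi e)).
suff sel_x : x \in models (B (nabla Phi e)) by exact: revealed_pref_of_fusion sel_x Cz.
have : [|| m == x, m == y | m == z].
  by move: (subsetP (fusion_sub Phi e) m sel_m); rewrite He !inE orbA.
case/or3P=> /eqP Em; subst m => //; first exact: fusion_of_revealed_pref sel_m Cx Rxy.
exact: fusion_of_revealed_pref (fusion_of_revealed_pref sel_m Cy Ryz) Cx Rxy.
Qed.

Lemma revealed_pref_basic : basic_assignment revealed_pref.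
Proof.
split=> [|Phi Psi equiv w w']; first exact: revealed_pref_total_preorder.
have [e He] := epistemic_pair hES w w'.
by rewrite (revealed_prefE Phi He) (revealed_prefE Psi He) (fusion_congr equiv (erefl _)).
Qed.

End RevealedPreference.

Theorem theorem1 (d : Order.disp_t) (S : orderType d)
  (wfS : well_founded (fun x y : S => (x < y)%O))
  (V : finType) (E : Type) (B : E -> form V)
  (hES : epistemic_space B)
  (nabla : profile S E -> E -> E) :
  ES_basic_fusion B nabla <->
  exists A : profile S E -> valuation V -> valuation V -> Prop,
    (basic_assignment A /\ represents B nabla A) /\
    (forall A' : profile S E -> valuation V -> valuation V -> Prop,
       basic_assignment A' -> represents B nabla A' ->
       forall Phi w w', A' Phi w w' <-> A Phi w w').
Proof.
split=> [hF|[A [[basicA repA] _]]]; last exact: represented_fusion repA basicA.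
have basicR := revealed_pref_basic hES hF.
have repR := revealed_pref_represents hES hF.
exists (revealed_pref B nabla); split=> // A' [totA' _] repA'.
exact: (represents_unique hES totA' repA' basicR.1 repR).
Qed.
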